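(* Any solution $(\phi^{n+1},\mu^{n+1})\in\Phi_h\times M_h$ of the J$_\varepsilon$-scheme satisfies $$\int_\Omega\phi^{n+1}\,d\boldsymbol x=\int_\Omega\phi^n\,d\boldsymbol x$$ and $$\delta_tE(\phi^{n+1})+\int_\Omega M^J_\varepsilon(\phi^{n+1})|\nabla\mu^{n+1}|^2\,d\boldsymbol x\le0,$$ where $E(\phi)=\int_\Omega\big(\frac12|\nabla\phi|^2+F(\phi)\big)d\boldsymbol x$ and $M^J_\varepsilon(\phi^{n+1})|\nabla\mu^{n+1}|^2$ means $\big(M^J_\varepsilon(\phi^{n+1})\nabla\mu^{n+1}\big)\cdot\nabla\mu^{n+1}$.
   Context: $\Omega\subset\mathbb{R}^d$ ($d=1,2,3$) bounded, $\eta>0$, $\varepsilon\in(0,1/2)$. $F(\phi)=\frac1{4\eta^2}\phi^2(\phi-1)^2=F_c+F_e$ with $F_c(\phi)=\frac1{4\eta^2}(\phi^4-2\phi^3+\frac32\phi^2)$, $F_e(\phi)=-\frac1{8\eta^2}\phi^2$. $\Delta t=T/N$, $\delta_tf^{n+1}=(f^{n+1}-f^n)/\Delta t$. $\mathcal T_h$ is a structured triangulation of $\Omega$ in which every element $I$ has vertices $\boldsymbol x_0,\dots,\boldsymbol x_d$ with $\boldsymbol x_k-\boldsymbol x_0$ parallel to the $k$-th coordinate axis. $\Phi_h$ is the space of continuous piecewise $\mathbb{P}_1$ functions, $M_h$ the space of continuous piecewise $\mathbb{P}_k$ functions ($k\ge1$). $I_h$ is nodal $\mathbb{P}_1$ interpolation,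 $(f,g)_h=\int_\Omega I_h(fg)\,d\boldsymbol x$, $(\cdot,\cdot)$ the $L^2$ product. Let $J(\phi)=(1-2\phi)\arcsin(\sqrt{1-\phi})+\sqrt{(1-\phi)\phi}+2\arcsin(\sqrt{1/2})\,\phi$ on $[0,1]$ (so $J''(\phi)=1/\sqrt{\phi(1-\phi)}$), and $J_\varepsilon\in C^2(\mathbb{R})$ equal to $J$ on $[\varepsilon,1-\varepsilon]$ and to its second-order Taylor polynomial at $\varepsilon$ (resp. $1-\varepsilon$) for $\phi<\varepsilon$ (resp. $\phi>1-\varepsilon$). For $\phi\in\Phi_h$, $M^J_\varepsilon(\phi)$ is the piecewise constant diagonal matrix whose $k$-th entry on $I$ is $\Big(\frac{\phi(\boldsymbol x_k)-\phi(\boldsymbol x_0)}{J_\varepsilon'(\phi(\boldsymbol x_k))-J_\varepsilon'(\phi(\boldsymbol x_0))}\Big)^2$ if $\phi(\boldsymbol x_k)\neq\phi(\boldsymbol x_0)$ and $\big(1/J_\varepsilon''(\phi(\boldsymbol x_0))\big)^2$ otherwise. J$_\varepsilon$-scheme: given $\phi^n\in\Phi_h$, find $(\phi^{n+1},\mu^{n+1})\in\Phi_h\times M_h$ such that for all $(\bar\phi,\bar\mu)\in\Phi_h\times M_h$: $\frac1{\Delta t}(\phi^{n+1}-\phi^n,\bar\mu)_h+(M^J_\varepsilon(\phi^{n+1})\nabla\mu^{n+1},\nabla\bar\mu)=0$ and $(\nabla\phi^{n+1},\nabla\bar\phi)+(F_c'(\phi^{n+1})+F_e'(\phi^n),\bar\phi)=(\mu^{n+1},\bar\phi)_h$.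 *)

From HB Require Import structures.
From mathcomp Require Import all_boot all_order all_algebra.
From mathcomp Require Import all_classical all_reals all_analysis.
Set Implicit Arguments. Unset Strict Implicit. Unset Printing Implicit Defensive.
Import Order.TTheory GRing.Theory Num.Theory.
Import numFieldNormedType.Exports.
Local Open Scope classical_set_scope.
Local Open Scope ring_scope.

Section Defs.
Variable R : realType.

(* d-dimensional integral over R^d, defined as the iterated one-dimensional
   Lebesgue integrals (Fubini); the first coordinate is integrated last. *)
Fixpoint iint (d : nat) : ('rV[R]_d -> R) -> R :=
  match d return ('rV[R]_d -> R) -> R with
  | 0 => fun f => f 0
  | d'.+1 => fun f =>
      Rintegral (@lebesgue_measure R) setT
        (fun s : R => iint (fun y : 'rV[R]_d' => f (row_mx (const_mx s : 'rV[R]_1) y)))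
  end.

Definition int_on (d : nat) (A : set 'rV[R]_d) (f : 'rV[R]_d -> R) : R :=
  iint (fun x => \1_A x * f x).

(* An element with vertices x_0 = x0 and x_k = x0 + h_k e_k (k-th axis). *)
Definition axis (d : nat) (i : 'I_d) : 'rV[R]_d := delta_mx 0 i.

Definition vtx (d : nat) (x0 h : 'rV[R]_d) (k : 'I_d) : 'rV[R]_d :=
  x0 + h 0 k *: axis k.

Definition vtxo (d : nat) (x0 h : 'rV[R]_d) (o : option 'I_d) : 'rV[R]_d :=
  if o is Some k then vtx x0 h k else x0.

Definition simplex (d : nat) (x0 h : 'rV[R]_d) : set 'rV[R]_d :=
  [set x | exists t : 'rV[R]_d, (forall k, 0 <= t 0 k) /\ \sum_k t 0 k <= 1 /\
           x = x0 + \row_k (t 0 k * h 0 k)].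

Definition simplex_int (d : nat) (x0 h : 'rV[R]_d) : set 'rV[R]_d :=
  [set x | exists t : 'rV[R]_d, (forall k, 0 < t 0 k) /\ \sum_k t 0 k < 1 /\
           x = x0 + \row_k (t 0 k * h 0 k)].

Definition conv_vtx (d : nat) (x0 h : 'rV[R]_d) (P : option 'I_d -> Prop)
  : set 'rV[R]_d :=
  [set x | exists w : option 'I_d -> R, (forall o, 0 <= w o) /\
     \sum_(o : option 'I_d) w o = 1 /\ (forall o, ~ P o -> w o = 0) /\
     x = \sum_(o : option 'I_d) w o *: vtxo x0 h o].

(* A structured triangulation of Omega with element set E: every element is
   a nondegenerate simplex with edges x_k - x_0 parallel to the k-th axis,
   Omega is the union of the elements, and the mesh is conforming (two
   distinct elements meet in the convex hull of their common vertices,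
   i.e. in a common face, possibly empty). *)
Definition structured_triangulation (d : nat) (E : finType)
  (x0 h : E -> 'rV[R]_d) (Omega : set 'rV[R]_d) : Prop :=
  [/\ forall e k, h e 0 k != 0,
      Omega = \bigcup_(e in [set: E]) simplex (x0 e) (h e) &
      forall e e', e != e' ->
        simplex (x0 e) (h e) `&` simplex (x0 e') (h e') =
        conv_vtx (x0 e) (h e)
          (fun o => exists o', vtxo (x0 e') (h e') o' = vtxo (x0 e) (h e) o)].

Definition is_poly_le (d k : nat) (p : 'rV[R]_d -> R) : Prop :=
  exists c : {ffun 'I_d -> 'I_k.+1} -> R, forall x,
    p x = \sum_(a : {ffun 'I_d -> 'I_k.+1} | (\sum_i (a i : nat) <= k)%N)
            c a * \prod_i x 0 i ^+ a i.

(* continuous piecewise P_k functions on the mesh (as a single-valued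
   function on R^d, continuity across elements is automatic; values outside
   Omega are irrelevant) *)
Definition pw_poly (d k : nat) (E : finType) (x0 h : E -> 'rV[R]_d)
  (u : 'rV[R]_d -> R) : Prop :=
  forall e, exists p, is_poly_le k p /\ forall x, simplex (x0 e) (h e) x -> u x = p x.

Definition grad (d : nat) (u : 'rV[R]_d -> R) (x : 'rV[R]_d) : 'rV[R]_d :=
  \row_i 'D_(axis i) u x.

Definition dotv (d : nat) (a b : 'rV[R]_d) : R := \sum_i a 0 i * b 0 i.

(* integral over Omega of a function, as sum of integrals over the (open)
   elements; for a conforming mesh this is the Lebesgue integral over Omega
   since element boundaries are null sets *)
Definition intO (d : nat) (E : finType) (x0 h : E -> 'rV[R]_d)
  (f : 'rV[R]_d -> R) : R :=
  \sum_e int_on (simplex_int (x0 e) (h e)) f.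

Definition interp (d : nat) (x0 h : 'rV[R]_d) (g : 'rV[R]_d -> R) (x : 'rV[R]_d)
  : R :=
  g x0 + \sum_k (g (vtx x0 h k) - g x0) * ((x - x0) 0 k / h 0 k).

Definition lumped (d : nat) (E : finType) (x0 h : E -> 'rV[R]_d)
  (f g : 'rV[R]_d -> R) : R :=
  \sum_e int_on (simplex_int (x0 e) (h e)) (interp (x0 e) (h e) (fun x => f x * g x)).

Definition Fdw (eta : R) (p : R) : R := (4 * eta ^+ 2)^-1 * (p ^+ 2 * (p - 1) ^+ 2).
Definition Fc (eta : R) (p : R) : R :=
  (4 * eta ^+ 2)^-1 * (p ^+ 4 - 2 * p ^+ 3 + 3 / 2 * p ^+ 2).
Definition Fe (eta : R) (p : R) : R := - (8 * eta ^+ 2)^-1 * p ^+ 2.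

Definition Jfun (p : R) : R :=
  (1 - 2 * p) * asin (Num.sqrt (1 - p)) + Num.sqrt ((1 - p) * p)
  + 2 * asin (Num.sqrt (1 / 2)) * p.

Definition Jeps (eps : R) (p : R) : R :=
  if p < eps then
    Jfun eps + derive1 Jfun eps * (p - eps) + derive1 (derive1 Jfun) eps / 2 * (p - eps) ^+ 2
  else if 1 - eps < p then
    Jfun (1 - eps) + derive1 Jfun (1 - eps) * (p - (1 - eps))
    + derive1 (derive1 Jfun) (1 - eps) / 2 * (p - (1 - eps)) ^+ 2
  else Jfun p.

Definition MJ (eps : R) (d : nat) (x0 h : 'rV[R]_d) (phi : 'rV[R]_d -> R)
  (k : 'I_d) : R :=
  let a := phi x0 in let b := phi (vtx x0 h k) in
  if b != a then ((b - a) / (derive1 (Jeps eps) b - derive1 (Jeps eps) a)) ^+ 2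
  else (derive1 (derive1 (Jeps eps)) a)^-1 ^+ 2.

Definition Mform (eps : R) (d : nat) (E : finType) (x0 h : E -> 'rV[R]_d)
  (phi u v : 'rV[R]_d -> R) : R :=
  \sum_e int_on (simplex_int (x0 e) (h e))
    (fun x => \sum_k MJ eps (x0 e) (h e) phi k * (grad u x) 0 k * (grad v x) 0 k).

Definition energy (eta : R) (d : nat) (E : finType) (x0 h : E -> 'rV[R]_d)
  (phi : 'rV[R]_d -> R) : R :=
  intO x0 h (fun x => 1 / 2 * dotv (grad phi x) (grad phi x) + Fdw eta (phi x)).

End Defs.

(* Testing the first equation of the scheme with the constant 1 kills the
   mobility term, and since phi^{n+1} - phi^n is affine on every element its
   mass-lumped integral is exact: mass is conserved.  Testing the second
   equation with phi^{n+1} - phi^n and the first one with mu^{n+1} identifies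
   the right-hand side of the energy estimate with -dt times the dissipation,
   so it remains to bound the energy increment element by element through the
   pointwise inequalities |a|^2/2 - |b|^2/2 <= a.(a - b) and
   F(b) - F(a) <= (F_c'(b) + F_e'(a))(b - a), which express that F_c is convex
   and F_e concave.  Neither the mobility, nor eps, nor d <= 3, nor the
   conformity of the mesh plays any role.

   The d-dimensional
   integral is an iterated one-dimensional Lebesgue integral, so linearity and
   monotonicity need integrable slices.  The integrands that occur, indicator
   functions of open simplices times polynomials, are differences of bounded,
   compactly supported, nonnegative lower semicontinuous functions; for such
   an f the slice integral s |-> iint (f (s, .)) is again lower semicontinuous
   by a Fatou lemma for iint (proved together with a uniform bound by
   induction on the dimension), hence measurable and integrable. *)

From HB Require Import structures.
From mathcomp Require Import all_boot all_order all_algebra.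
From mathcomp Require Import all_classical all_reals all_analysis.
From mathcomp Require Import measurable_realfun ring lra.
Import Order.TTheory GRing.Theory Num.Theory.
Import numFieldNormedType.Exports.
Local Open Scope classical_set_scope.
Local Open Scope ring_scope.
Set Implicit Arguments. Unset Strict Implicit. Unset Printing Implicit Defensive.

(** * Lebesgue integrals on the real line *)

Section RealLine.
Variable R : realType.
Local Notation lebesgue := (@lebesgue_measure R).

Definition liminf_ge (u : nat -> R) (x : R) : Prop :=
  forall e, 0 < e -> exists N, forall n, (N <= n)%N -> x - e < u n.

Lemma liminf_geP (u : nat -> R) (x : R) :
  liminf_ge u x <-> (x%:E <= limn_einf (fun n => (u n)%:E))%E.
Proof.
rewrite limn_einf_lim (cvg_lim _ (@cvg_einfs_sup _ _)) //; split.
- move=> ux; apply/lee_addgt0Pr => e e0.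
  have [N uN] := ux e e0.
  apply: (@le_trans _ _ (einfs (fun n => (u n)%:E) N + e%:E)); last first.
    by apply: leeD2r; apply: ereal_sup_ubound; exists N.
  rewrite -leeBlDr //; apply: le_ereal_inf_tmp => _ [n /= Nn <-].
  by rewrite -EFinB lee_fin ltW // uN.
- move=> xu e e0.
  have : ((x - e)%:E < ereal_sup (range (einfs (fun n => (u n)%:E))))%E.
    by apply: lt_le_trans xu; rewrite lte_fin ltrBlDr ltrDl.
  move=> /ereal_sup_gt [_ [N _ <-] uN].
  exists N => n Nn; rewrite -lte_fin; apply: (lt_le_trans uN).
  by apply: ereal_inf_lbound; exists n.
Qed.

Lemma lebesgue_cc_lty (B : R) : (lebesgue (`[- B, B]%classic : set R) < +oo)%O.
Proof. by rewrite lebesgue_measure_itv; case: ifP => _; rewrite ?ltry. Qed.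

Lemma patch_cc_id (G : R -> R) (B : R) :
  (forall s, B < `|s| -> G s = 0) -> G \_ `[- B, B] = G.
Proof.
move=> GB; apply/funext => s; rewrite patchE; case: ifPn => // /negP sB.
rewrite GB // ltNge; apply/negP => sB'; apply: sB.
by rewrite inE /= in_itv /= -ler_norml.
Qed.

Section BoundedSupport.
Variables (G : R -> R) (C B : R).
Hypotheses (mG : measurable_fun setT G) (G_range : forall s, 0 <= G s <= C)
  (G_supp : forall s, B < `|s| -> G s = 0).

Lemma bounded_cc_integrable : lebesgue.-integrable `[- B, B] (EFin \o G).
Proof.
apply: measurable_bounded_integrable => //; first exact: lebesgue_cc_lty.
  exact: measurable_funS mG.
exists C; split; first exact: num_real.
move=> M CM s _ /=; apply: le_trans (ltW CM).
by have /andP[G0 GC] := G_range s; rewrite ger0_norm.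
Qed.

Lemma integrable_bounded_support : lebesgue.-integrable setT (EFin \o G).
Proof.
rewrite -(patch_cc_id G_supp) comp_patch.
by apply/(integrable_mkcond _ _).1 => //; exact: bounded_cc_integrable.
Qed.

Lemma Rintegral_bounded_support :
  0 <= B -> 0 <= Rintegral lebesgue setT G <= C * (B *+ 2).
Proof.
move=> B0; apply/andP; split.
  by apply: Rintegral_ge0 => s _; have /andP[] := G_range s.
rewrite -(patch_cc_id G_supp) -Rintegral_mkcond.
have C0 : 0 <= C by have /andP[G0 GC] := G_range 0; exact: le_trans GC.
apply: (@le_trans _ _ (Rintegral lebesgue `[- B, B] (fun=> C))).
  apply: le_Rintegral => //; first exact: bounded_cc_integrable.
    apply: measurable_bounded_integrable => //; first exact: lebesgue_cc_lty.
    exists C; split; first exact: num_real.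
    by move=> M CM s _ /=; apply: le_trans (ltW CM); rewrite ger0_norm.
  by move=> s _; have /andP[] := G_range s.
rewrite Rintegral_cst // ler_wpM2l //; have := lebesgue_measure_itv `[- B, B]%R => /= ->.
by case: ifP => _ /=; rewrite ?opprK ?mulr2n ?addr_ge0.
Qed.

End BoundedSupport.

Lemma EFin_Rintegral (G : R -> R) : lebesgue.-integrable setT (EFin \o G) ->
  (Rintegral lebesgue setT G)%:E = (\int[lebesgue]_(s in setT) (G s)%:E)%E.
Proof. by move=> iG; rewrite /Rintegral fineK //; exact: integrable_fin_num iG. Qed.

End RealLine.

(** * Iterated integrals of bounded lower semicontinuous functions *)

Section IteratedIntegral.
Variable R : realType.
Local Notation lebesgue := (@lebesgue_measure R).

Definition slice d (f : 'rV[R]_d.+1 -> R) (s : R) : 'rV[R]_d -> R :=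
  fun y => f (row_mx (const_mx s : 'rV[R]_1) y).

Lemma iintS d (f : 'rV[R]_d.+1 -> R) :
  iint f = Rintegral lebesgue setT (fun s => iint (slice f s)).
Proof. by []. Qed.

Lemma iint0 d : iint (fun _ : 'rV[R]_d => 0) = 0.
Proof.
elim: d => [//|d IH]; rewrite iintS /slice.
under eq_Rintegral => s _ do rewrite IH.
by rewrite Rintegral_cst // mul0r.
Qed.

Definition cube d (x : 'rV[R]_d) (r : R) (y : 'rV[R]_d) : Prop :=
  forall i, `|y 0 i - x 0 i| < r.

Lemma cube_min d (x y : 'rV[R]_d) (r1 r2 : R) :
  cube x (Num.min r1 r2) y -> cube x r1 y /\ cube x r2 y.
Proof. by move=> xy; split=> i; have := xy i; rewrite lt_min => /andP[]. Qed.

Lemma cube_row_mx d (s t r : R) (y y' : 'rV[R]_d) :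
  `|t - s| < r -> cube y r y' ->
  cube (row_mx (const_mx s : 'rV[R]_1) y) r (row_mx (const_mx t : 'rV[R]_1) y').
Proof. by move=> st yy' i; rewrite !mxE; case: (fintype.split i) => j; rewrite ?mxE. Qed.

Definition lsc d (f : 'rV[R]_d -> R) : Prop :=
  forall x e, 0 < e -> exists2 r, 0 < r & forall y, cube x r y -> f x - e < f y.

Record bounded_lsc d (M B : R) (f : 'rV[R]_d -> R) : Prop := BoundedLsc {
  bounded_lsc_radius : 0 <= B;
  bounded_lsc_range : forall x, 0 <= f x <= M;
  bounded_lsc_support : forall (x : 'rV[R]_d) i, B < `|x 0 i| -> f x = 0;
  bounded_lsc_lsc : lsc f }.

Lemma bounded_lsc_slice d (M B : R) (f : 'rV[R]_d.+1 -> R) s :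
  bounded_lsc M B f -> bounded_lsc M B (slice f s).
Proof.
case=> B0 f_range f_supp f_lsc; split => // [y|y i Bi|y e e0].
- exact: f_range.
- by apply: (f_supp _ (rshift 1 i)); rewrite (row_mxEr (const_mx s : 'rV[R]_1)).
- have [r r0 fr] := f_lsc (row_mx (const_mx s : 'rV[R]_1) y) e e0.
  exists r => // y' yy'; apply: fr; apply: cube_row_mx yy'.
  by rewrite subrr normr0.
Qed.

Lemma slice_outside d (M B : R) (f : 'rV[R]_d.+1 -> R) s :
  bounded_lsc M B f -> B < `|s| -> slice f s = fun=> 0.
Proof.
case=> _ _ f_supp _ Bs; apply/funext => y.
by apply: (f_supp _ (@lshift 1 d ord0)); rewrite (row_mxEl (const_mx s : 'rV[R]_1)) mxE.
Qed.

Definition iint_fatou_at d : Prop :=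
  forall (g : nat -> 'rV[R]_d -> R) f M B,
    (forall n, bounded_lsc M B (g n)) -> bounded_lsc M B f ->
    (forall y, liminf_ge (fun n => g n y) (f y)) ->
    liminf_ge (fun n => iint (g n)) (iint f).

Definition iint_bound_at d : Prop :=
  forall M B (f : 'rV[R]_d -> R), bounded_lsc M B f -> 0 <= iint f <= M * (B *+ 2) ^+ d.

Section Slices.
Variable d : nat.
Hypotheses (fatou_d : iint_fatou_at d) (bound_d : iint_bound_at d).

Lemma slice_iint_range M B (f : 'rV[R]_d.+1 -> R) : bounded_lsc M B f ->
  forall s, 0 <= iint (slice f s) <= M * (B *+ 2) ^+ d.
Proof. by move=> fB s; exact: bound_d (bounded_lsc_slice s fB). Qed.

Lemma lsc_slice_iint M B (f : 'rV[R]_d.+1 -> R) : bounded_lsc M B f ->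
  lower_semicontinuous (fun s => (iint (slice f s))%:E).
Proof.
(* If the slice integrals stayed below [a] along some [t n --> s], Fatou's
   lemma in dimension [d] would contradict [a < iint (slice f s)]. *)
move=> fB s a; rewrite lte_fin => a_lt.
suff [r r0 near_s] : exists2 r : R, 0 < r &
    forall t, `|s - t| < r -> a < iint (slice f t).
  exists (ball s r); first exact: nbhsx_ballx.
  by move=> t; rewrite -ball_normE /= => st; rewrite lte_fin; exact: near_s.
apply: contrapT => no_r.
have t_ex : forall n : nat, exists t : R,
    `|s - t| < n.+1%:R^-1 /\ iint (slice f t) <= a.
  move=> n; apply: contrapT => no_t; apply: no_r.
  exists n.+1%:R^-1; first by rewrite invr_gt0.
  by move=> u su; rewrite ltNge; apply/negP => ua; apply: no_t; exists u.
have [t t_s] := choice t_ex.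
have slice_t : forall y, liminf_ge (fun n => slice f (t n) y) (slice f s y).
  move=> y e e0.
  have [r r0 fr] := bounded_lsc_lsc fB (row_mx (const_mx s : 'rV[R]_1) y) e0.
  have [N _ HN] := near_infty_natSinv_lt (PosNum r0).
  exists N => n Nn; apply: fr; apply: cube_row_mx; last by move=> i; rewrite subrr normr0.
  by rewrite distrC; apply: lt_trans (proj1 (t_s n)) _; exact: HN.
have e0 : 0 < iint (slice f s) - a by rewrite subr_gt0.
have [N HN] := fatou_d (fun n => bounded_lsc_slice (t n) fB) (bounded_lsc_slice s fB)
  slice_t e0.
by have := HN N (leqnn N); rewrite opprB addrCA subrr addr0 ltNge (proj2 (t_s N)).
Qed.

Lemma measurable_slice_iint M B (f : 'rV[R]_d.+1 -> R) : bounded_lsc M B f ->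
  measurable_fun setT (fun s => iint (slice f s)).
Proof.
move=> fB; apply/measurable_EFinP.
exact: lower_semicontinuous_measurable (lsc_slice_iint fB).
Qed.

Lemma integrable_slice_iint M B (f : 'rV[R]_d.+1 -> R) : bounded_lsc M B f ->
  lebesgue.-integrable setT (EFin \o fun s => iint (slice f s)).
Proof.
move=> fB; apply: (@integrable_bounded_support _ _ (M * (B *+ 2) ^+ d) B).
- exact: measurable_slice_iint fB.
- exact: slice_iint_range fB.
- by move=> s Bs; rewrite (slice_outside fB Bs) iint0.
Qed.

Lemma iint_fatouS : iint_fatou_at d.+1.
Proof.
move=> g f M B gB fB gf.
pose G n s := iint (slice (g n) s).
have G_ge0 n s : (0 <= (G n s)%:E)%E.
  by rewrite lee_fin; case/andP: (slice_iint_range (gB n) s).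
have mG n : measurable_fun setT (fun s => (G n s)%:E).
  by apply/measurable_EFinP; exact: measurable_slice_iint (gB n).
apply/liminf_geP.
have -> : (fun n => (iint (g n))%:E) = (fun n => \int[lebesgue]_(s in setT) (G n s)%:E)%E.
  by apply/funext => n; rewrite iintS EFin_Rintegral //; exact: integrable_slice_iint.
apply: le_trans (fatou lebesgue measurableT mG (fun n s _ => G_ge0 n s)).
rewrite iintS EFin_Rintegral; last exact: integrable_slice_iint fB.
apply: ge0_le_integral => //.
- by move=> s _; rewrite lee_fin; case/andP: (slice_iint_range fB s).
- by apply/measurable_EFinP; exact: measurable_slice_iint fB.
- apply: measurableT_comp; first exact: oppe_measurable.
  apply: (measurable_fun_limn_esup (f := fun n s => - (G n s)%:E)%E) => n.
  by apply: measurableT_comp; [exact: oppe_measurable | exact: mG].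
- move=> s _; apply/liminf_geP.
  apply: fatou_d (fun n => bounded_lsc_slice s (gB n)) (bounded_lsc_slice s fB) _.
  by move=> y; exact: gf.
Qed.

Lemma iint_boundS : iint_bound_at d.+1.
Proof.
move=> M B f fB; rewrite iintS exprSr mulrA.
apply: Rintegral_bounded_support; last exact: bounded_lsc_radius fB.
- exact: measurable_slice_iint fB.
- exact: slice_iint_range fB.
- by move=> s Bs; rewrite (slice_outside fB Bs) iint0.
Qed.

End Slices.

Lemma iint_fatou_bound d : iint_fatou_at d /\ iint_bound_at d.
Proof.
elim: d => [|d [fatou_d bound_d]]; last first.
  by split; [exact: iint_fatouS | exact: iint_boundS].
split; first by move=> g f M B _ _ gf; exact: gf.
by move=> M B f fB; rewrite expr0 mulr1; exact: bounded_lsc_range fB 0.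
Qed.

Lemma iintB_bounded_lsc d M B M' B' (f g : 'rV[R]_d -> R) :
  bounded_lsc M B f -> bounded_lsc M' B' g ->
  iint (fun x => f x - g x) = iint f - iint g.
Proof.
elim: d M B M' B' f g => [//|d IH] M B M' B' f g fB gB.
have [fatou_d bound_d] := iint_fatou_bound d.
have ifB := integrable_slice_iint fatou_d bound_d fB.
have igB := integrable_slice_iint fatou_d bound_d gB.
rewrite !iintS -RintegralB //; apply: eq_Rintegral => s _.
exact: IH (bounded_lsc_slice s fB) (bounded_lsc_slice s gB).
Qed.

Lemma le_iint_bounded_lsc d M B M' B' (f g : 'rV[R]_d -> R) :
  bounded_lsc M B f -> bounded_lsc M' B' g -> (forall x, f x <= g x) ->
  iint f <= iint g.
Proof.
elim: d M B M' B' f g => [|d IH] M B M' B' f g fB gB fg; first exact: fg.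
have [fatou_d bound_d] := iint_fatou_bound d.
have ifB := integrable_slice_iint fatou_d bound_d fB.
have igB := integrable_slice_iint fatou_d bound_d gB.
rewrite !iintS; apply: le_Rintegral => //.
move=> s _; apply: IH (bounded_lsc_slice s fB) (bounded_lsc_slice s gB) _.
by move=> y; exact: fg.
Qed.

End IteratedIntegral.

(** * Differences of bounded lower semicontinuous functions *)

Section DifferencesOfLsc.
Variable R : realType.

Lemma bounded_lscD d M B M' B' (f g : 'rV[R]_d -> R) :
  bounded_lsc M B f -> bounded_lsc M' B' g ->
  bounded_lsc (M + M') (Num.max B B') (fun x => f x + g x).
Proof.
case=> B0 f_range f_supp f_lsc [_ g_range g_supp g_lsc]; split.
- by rewrite le_max B0.
- move=> x; case/andP: (f_range x) => f0 fM; case/andP: (g_range x) => g0 gM.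
  by rewrite addr_ge0 //= lerD.
- move=> x i; rewrite gt_max => /andP[Bi B'i].
  by rewrite (f_supp x i) // (g_supp x i) // addr0.
- move=> x e e0; have e20 : 0 < e / 2 by rewrite divr_gt0.
  have [r1 r10 fr] := f_lsc x _ e20; have [r2 r20 gr] := g_lsc x _ e20.
  exists (Num.min r1 r2); first by rewrite lt_min r10 r20.
  move=> y /cube_min[y1 y2]; have := fr y y1; have := gr y y2; lra.
Qed.

Definition blsc d (f : 'rV[R]_d -> R) : Prop := exists M B, bounded_lsc M B f.

Definition diff_blsc d (f : 'rV[R]_d -> R) : Prop :=
  exists a b, [/\ blsc a, blsc b & forall x, f x = a x - b x].

Lemma blscD d (f g : 'rV[R]_d -> R) : blsc f -> blsc g -> blsc (fun x => f x + g x).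
Proof.
by move=> [M [B fB]] [M' [B' gB]]; exists (M + M'), (Num.max B B'); exact: bounded_lscD.
Qed.

Lemma iint_diff_blsc d (f a b : 'rV[R]_d -> R) :
  blsc a -> blsc b -> (forall x, f x = a x - b x) -> iint f = iint a - iint b.
Proof.
move=> [M [B aB]] [M' [B' bB]] fab; rewrite -(iintB_bounded_lsc aB bB).
by congr iint; apply/funext.
Qed.

Lemma iintD_blsc d (f g : 'rV[R]_d -> R) :
  blsc f -> blsc g -> iint (fun x => f x + g x) = iint f + iint g.
Proof.
move=> fB gB; rewrite [iint f](@iint_diff_blsc _ _ _ g (blscD fB gB) gB) ?subrK //.
by move=> x; rewrite addrK.
Qed.

Lemma iintD d (f g : 'rV[R]_d -> R) :
  diff_blsc f -> diff_blsc g -> iint (fun x => f x + g x) = iint f + iint g.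
Proof.
move=> [a [b [aB bB fab]]] [a' [b' [aB' bB' gab]]].
rewrite (iint_diff_blsc aB bB fab) (iint_diff_blsc aB' bB' gab).
rewrite (@iint_diff_blsc _ _ (fun x => a x + a' x) (fun x => b x + b' x)); try exact: blscD.
  by rewrite !iintD_blsc // addrACA opprD.
by move=> x; rewrite fab gab addrACA opprD.
Qed.

Lemma diff_blscN d (f : 'rV[R]_d -> R) : diff_blsc f -> diff_blsc (fun x => - f x).
Proof. by move=> [a [b [aB bB fab]]]; exists b, a; split => // x; rewrite fab opprB. Qed.

Lemma iintN d (f : 'rV[R]_d -> R) : diff_blsc f -> iint (fun x => - f x) = - iint f.
Proof.
move=> [a [b [aB bB fab]]].
rewrite (iint_diff_blsc aB bB fab) (@iint_diff_blsc _ _ b a) ?opprB // => x.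
by rewrite fab opprB.
Qed.

Lemma iintB d (f g : 'rV[R]_d -> R) :
  diff_blsc f -> diff_blsc g -> iint (fun x => f x - g x) = iint f - iint g.
Proof. by move=> fD gD; rewrite iintD ?iintN //; exact: diff_blscN. Qed.

Lemma le_iint d (f g : 'rV[R]_d -> R) :
  diff_blsc f -> diff_blsc g -> (forall x, f x <= g x) -> iint f <= iint g.
Proof.
move=> [a [b [aB bB fab]]] [a' [b' [aB' bB' gab]]] fg.
rewrite (iint_diff_blsc aB bB fab) (iint_diff_blsc aB' bB' gab) lerBlDr addrAC lerBrDr.
rewrite -!iintD_blsc //.
have [[M [B abB]] [M' [B' abB']]] := (blscD aB bB', blscD aB' bB).
apply: le_iint_bounded_lsc abB abB' _ => x.
by have := fg x; rewrite fab gab; lra.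
Qed.

End DifferencesOfLsc.

(** * Continuous integrands on open sets *)

Section ContinuousIntegrands.
Variable R : realType.

Definition cube_open d (S : set 'rV[R]_d) : Prop :=
  forall x, S x -> exists2 r, 0 < r & cube x r `<=` S.

Definition cont d (Q : 'rV[R]_d -> R) : Prop :=
  forall x e, 0 < e -> exists2 r, 0 < r & forall y, cube x r y -> `|Q y - Q x| < e.

Lemma cube_open_gt0 d (Q : 'rV[R]_d -> R) : cont Q -> cube_open [set x | 0 < Q x].
Proof.
move=> Q_cont x /= Qx; have [r r0 Qr] := Q_cont x _ Qx.
by exists r => // y /Qr; rewrite ltr_norml => /andP[Qxy _] /=; lra.
Qed.

Lemma cube_openI d (S1 S2 : set 'rV[R]_d) :
  cube_open S1 -> cube_open S2 -> cube_open (S1 `&` S2).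
Proof.
move=> S1_open S2_open x [S1x S2x].
have [r1 r10 r1S] := S1_open x S1x; have [r2 r20 r2S] := S2_open x S2x.
exists (Num.min r1 r2); first by rewrite lt_min r10 r20.
by move=> y /cube_min[/r1S ? /r2S ?].
Qed.

Lemma cube_open_forall d (I : finType) (S : I -> set 'rV[R]_d) :
  (forall i, cube_open (S i)) -> cube_open [set x | forall i, S i x].
Proof.
move=> S_open x /= Sx.
have r_ex i : exists r, 0 < r /\ cube x r `<=` S i.
  by have [r r0 rS] := S_open i x (Sx i); exists r.
have [r r_spec] := choice r_ex.
exists (\big[Num.min/1]_i r i).
  by apply/bigmin_gtP; split => // i _; case: (r_spec i).
move=> y xy i; apply: (proj2 (r_spec i)) => j.
by apply: lt_le_trans (xy j) _; exact: bigmin_le.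
Qed.

Lemma lsc_indic_funrpos d (S : set 'rV[R]_d) (Q : 'rV[R]_d -> R) :
  cube_open S -> cont Q -> lsc (fun x => \1_S x * Q^\+ x).
Proof.
move=> S_open Q_cont x e e0; have [Sx|Sx] := pselect (S x); last first.
  exists 1 => // y _; rewrite indicE memNset // mul0r sub0r.
  apply: (@lt_le_trans _ _ 0); first by rewrite oppr_lt0.
  by rewrite mulr_ge0 ?funrpos_ge0 // indicE; case: (_ \in _).
have [r1 r10 r1S] := S_open x Sx; have [r2 r20 Qr] := Q_cont x e e0.
exists (Num.min r1 r2); first by rewrite lt_min r10 r20.
move=> y /cube_min[/r1S Sy /Qr]; rewrite !indicE !mem_set // !mul1r /funrpos.
rewrite ltr_norml => /andP[Qxy _].
by case: (lerP (Q x) 0) => Qx; case: (lerP (Q y) 0) => Qy; lra.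
Qed.

Section IndicatorTimesContinuous.
Variables (d : nat) (S : set 'rV[R]_d) (B : R).
Hypotheses (B0 : 0 <= B) (S_open : cube_open S)
  (S_bnd : forall x i, S x -> `|x 0 i| <= B).

Lemma bounded_lsc_indic (Q : 'rV[R]_d -> R) M : 0 <= M -> cont Q ->
  (forall x, S x -> `|Q x| <= M) -> bounded_lsc M B (fun x => \1_S x * Q^\+ x).
Proof.
move=> M0 Q_cont Q_bnd; split => //.
- move=> x; rewrite indicE; case: (boolP (x \in S)) => [/set_mem Sx|_]; last first.
    by rewrite mul0r lexx.
  rewrite mul1r funrpos_ge0 /= /funrpos ge_max M0 andbT.
  exact: le_trans (ler_norm _) (Q_bnd x Sx).
- move=> x i Bi; rewrite indicE memNset ?mul0r // => Sx.
  by have := S_bnd i Sx; rewrite leNgt Bi.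
- exact: lsc_indic_funrpos.
Qed.

Lemma diff_blsc_indic (Q : 'rV[R]_d -> R) M : cont Q ->
  (forall x, S x -> `|Q x| <= M) -> diff_blsc (fun x => \1_S x * Q x).
Proof.
move=> Q_cont Q_bnd.
have M0 : 0 <= Num.max M 0 by rewrite le_max lexx orbT.
have Q_bnd' x : S x -> `|Q x| <= Num.max M 0 by move=> Sx; rewrite le_max Q_bnd.
have NQ_cont : cont (\- Q).
  move=> x e e0; have [r r0 Qr] := Q_cont x e e0.
  by exists r => // y xy; rewrite /= -opprD normrN; exact: Qr.
exists (fun x => \1_S x * Q^\+ x), (fun x => \1_S x * Q^\- x); split.
- by exists (Num.max M 0), B; exact: bounded_lsc_indic.
- exists (Num.max M 0), B; rewrite -funrposN; apply: bounded_lsc_indic => //.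
  by move=> x Sx; rewrite /= normrN; exact: Q_bnd'.
- by move=> x; rewrite -mulrBr -[in LHS](funrposBneg Q).
Qed.

End IndicatorTimesContinuous.

(* Boundedness on cubes is built in so that no compactness argument is needed. *)
Definition cont_bounded d (Q : 'rV[R]_d -> R) : Prop :=
  cont Q /\ forall B, exists M, forall x : 'rV[R]_d, (forall i, `|x 0 i| <= B) -> `|Q x| <= M.

Lemma cont_bounded_cst d (a : R) : cont_bounded (fun _ : 'rV[R]_d => a).
Proof.
split; first by move=> x e e0; exists 1 => // y _; rewrite subrr normr0.
by move=> B; exists `|a|.
Qed.

Lemma cont_bounded_coord d (j : 'I_d) : cont_bounded (fun x : 'rV[R]_d => x 0 j).
Proof.
split; first by move=> x e e0; exists e => // y xy; exact: xy.
by move=> B; exists B => x; exact.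
Qed.

Lemma cont_boundedD d (Q1 Q2 : 'rV[R]_d -> R) :
  cont_bounded Q1 -> cont_bounded Q2 -> cont_bounded (fun x => Q1 x + Q2 x).
Proof.
move=> [Q1_cont Q1_bnd] [Q2_cont Q2_bnd]; split.
- move=> x e e0; have e20 : 0 < e / 2 by rewrite divr_gt0.
  have [r1 r10 Q1r] := Q1_cont x _ e20; have [r2 r20 Q2r] := Q2_cont x _ e20.
  exists (Num.min r1 r2); first by rewrite lt_min r10 r20.
  move=> y /cube_min[/Q1r h1 /Q2r h2].
  rewrite opprD addrACA; apply: le_lt_trans (ler_normD _ _) _; lra.
- move=> B; have [M1 HM1] := Q1_bnd B; have [M2 HM2] := Q2_bnd B.
  exists (M1 + M2) => x xB.
  by apply: le_trans (ler_normD _ _) _; rewrite lerD ?HM1 ?HM2.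
Qed.

Lemma cont_boundedM d (Q1 Q2 : 'rV[R]_d -> R) :
  cont_bounded Q1 -> cont_bounded Q2 -> cont_bounded (fun x => Q1 x * Q2 x).
Proof.
move=> [Q1_cont Q1_bnd] [Q2_cont Q2_bnd]; split.
- move=> x e e0; set a := Q1 x; set b := Q2 x.
  have K0 : 0 < 1 + `|a| + `|b| by rewrite -addrA ltr_wpDr ?addr_ge0.
  pose eta := Num.min 1 (e / (1 + `|a| + `|b|)).
  have eta0 : 0 < eta by rewrite lt_min ltr01 divr_gt0.
  have eta1 : eta <= 1 by rewrite ge_min lexx.
  have etaK : eta * (1 + `|a| + `|b|) <= e.
    by rewrite -ler_pdivlMr // ge_min lexx orbT.
  have [r1 r10 Q1r] := Q1_cont x _ eta0; have [r2 r20 Q2r] := Q2_cont x _ eta0.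
  exists (Num.min r1 r2); first by rewrite lt_min r10 r20.
  move=> y /cube_min[/Q1r h1 /Q2r h2].
  have -> : Q1 y * Q2 y - a * b = (Q1 y - a) * (Q2 y - b) + a * (Q2 y - b) + b * (Q1 y - a).
    by ring.
  apply: le_lt_trans (ler_normD _ _) _; rewrite !normrM.
  apply: le_lt_trans (lerD (ler_normD _ _) (lexx _)) _; rewrite !normrM.
  have := normr_ge0 (Q1 y - a); have := normr_ge0 (Q2 y - b).
  have := normr_ge0 a; have := normr_ge0 b; nra.
- move=> B; have [M1 HM1] := Q1_bnd B; have [M2 HM2] := Q2_bnd B.
  by exists (M1 * M2) => x xB; rewrite normrM ler_pM ?HM1 ?HM2.
Qed.

Lemma cont_boundedN d (Q : 'rV[R]_d -> R) :
  cont_bounded Q -> cont_bounded (fun x => - Q x).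
Proof.
move=> Q_cb; under eq_fun do rewrite -mulN1r.
by apply: cont_boundedM => //; exact: cont_bounded_cst.
Qed.

Lemma cont_boundedX d (Q : 'rV[R]_d -> R) n :
  cont_bounded Q -> cont_bounded (fun x => Q x ^+ n).
Proof.
move=> Q_cb; elim: n => [|n IH].
  by under eq_fun do rewrite expr0; exact: cont_bounded_cst.
by under eq_fun do rewrite exprS; exact: cont_boundedM.
Qed.

Lemma cont_bounded_sum d (I : Type) (r : seq I) (F : I -> 'rV[R]_d -> R) :
  (forall i, cont_bounded (F i)) -> cont_bounded (fun x => \sum_(i <- r) F i x).
Proof.
move=> F_cb; elim: r => [|i r IH].
  by under eq_fun do rewrite big_nil; exact: cont_bounded_cst.
by under eq_fun do rewrite big_cons; exact: cont_boundedD.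
Qed.

Definition affine_map d (c0 : R) (c x : 'rV[R]_d) : R := c0 + \sum_j c 0 j * x 0 j.

Lemma cont_bounded_affine_map d c0 (c : 'rV[R]_d) : cont_bounded (affine_map c0 c).
Proof.
apply: cont_boundedD; first exact: cont_bounded_cst.
apply: (@cont_bounded_sum _ _ _ (fun j x => c 0 j * x 0 j)) => j.
by apply: cont_boundedM; [exact: cont_bounded_cst | exact: cont_bounded_coord].
Qed.

End ContinuousIntegrands.

Ltac cont_bounded_poly :=
  repeat first [ exact: cont_bounded_cst | exact: cont_bounded_coord
               | exact: cont_bounded_affine_map | apply: cont_boundedD
               | apply: cont_boundedN | apply: cont_boundedM | apply: cont_boundedX
               | apply: cont_bounded_sum | intro ].

(** * Simplices *)

Section Simplices.
Variable R : realType.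

Definition bary d (x0 h x : 'rV[R]_d) (k : 'I_d) : R := (x 0 k - x0 0 k) / h 0 k.

Lemma simplex_intE d (x0 h : 'rV[R]_d) : (forall k, h 0 k != 0) ->
  simplex_int x0 h =
  [set x | forall k, 0 < bary x0 h x k] `&` [set x | 0 < 1 - \sum_k bary x0 h x k].
Proof.
move=> h_neq0; apply/seteqP; split => x /=.
- move=> [t [t_gt0 [t_sum ->]]].
  have bary_t k : bary x0 h (x0 + \row_k (t 0 k * h 0 k)) k = t 0 k.
    by rewrite /bary !mxE addrAC subrr add0r mulfK.
  split => [k|] /=; first by rewrite bary_t.
  by under eq_bigr do rewrite bary_t; rewrite subr_gt0.
- move=> [/= b_gt0 b_sum]; exists (\row_k bary x0 h x k); split => [k|].
    by rewrite mxE.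
  split; first by under eq_bigr do rewrite mxE; rewrite -subr_gt0.
  by apply/rowP => k; rewrite !mxE /bary divfK // addrC subrK.
Qed.

Lemma simplex_int_open d (x0 h : 'rV[R]_d) : (forall k, h 0 k != 0) ->
  cube_open (simplex_int x0 h).
Proof.
move=> h_neq0; rewrite simplex_intE //; apply: cube_openI.
  apply: cube_open_forall => k; apply: cube_open_gt0.
  have [bary_cont _] : cont_bounded (fun x => bary x0 h x k).
    by rewrite /bary; cont_bounded_poly.
  exact: bary_cont.
apply: cube_open_gt0.
have [sum_cont _] : cont_bounded (fun x => 1 - \sum_k bary x0 h x k).
  by rewrite /bary; cont_bounded_poly.
exact: sum_cont.
Qed.

Lemma simplex_int_sub d (x0 h : 'rV[R]_d) : simplex_int x0 h `<=` simplex x0 h.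
Proof.
move=> x [t [t_gt0 [t_sum ->]]]; exists t.
by split => [k|]; [exact: ltW | split => //; exact: ltW].
Qed.

Lemma simplex_x0 d (x0 h : 'rV[R]_d) : simplex x0 h x0.
Proof.
exists 0; split => [k|]; first by rewrite mxE.
split; first by rewrite big1 // => k _; rewrite mxE.
by apply/rowP => k; rewrite !mxE mul0r addr0.
Qed.

Lemma simplex_vtx d (x0 h : 'rV[R]_d) k : simplex x0 h (vtx x0 h k).
Proof.
exists (axis R k); split => [j|]; first by rewrite mxE; case: (_ && _).
split.
  rewrite (bigD1 k) //= big1 => [|j /negbTE jk]; last by rewrite mxE jk andbF.
  by rewrite mxE !eqxx addr0.
apply/rowP => j; rewrite !mxE eqxx /=; congr (_ + _).
by case: eqP => [->|_]; rewrite ?mulr1 ?mul1r ?mulr0 ?mul0r.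
Qed.

Lemma simplex_bounded d (x0 h x : 'rV[R]_d) i : simplex x0 h x ->
  `|x 0 i| <= \sum_j (`|x0 0 j| + `|h 0 j|).
Proof.
move=> [t [t_ge0 [t_sum ->]]].
have t_le1 : t 0 i <= 1.
  apply: le_trans t_sum; rewrite (bigD1 i) //= lerDl.
  by apply: sumr_ge0 => j _; exact: t_ge0.
rewrite (bigD1 i) //=; apply: (@le_trans _ _ (`|x0 0 i| + `|h 0 i|)); last first.
  by rewrite lerDl; apply: sumr_ge0 => j _; rewrite addr_ge0.
rewrite !mxE; apply: le_trans (ler_normD _ _) _; rewrite lerD2l normrM.
by rewrite ger0_norm // ler_piMl.
Qed.

Lemma diff_blsc_simplex d (x0 h : 'rV[R]_d) (Q : 'rV[R]_d -> R) :
  (forall k, h 0 k != 0) -> cont_bounded Q ->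
  diff_blsc (fun x => \1_(simplex_int x0 h) x * Q x).
Proof.
move=> h_neq0 [Q_cont Q_bnd].
have S_bnd x i : simplex_int x0 h x -> `|x 0 i| <= \sum_j (`|x0 0 j| + `|h 0 j|).
  by move=> /simplex_int_sub; exact: simplex_bounded.
have [M QM] := Q_bnd (\sum_j (`|x0 0 j| + `|h 0 j|)).
apply: (diff_blsc_indic _ _ S_bnd Q_cont).
- by apply: sumr_ge0 => j _; rewrite addr_ge0.
- exact: simplex_int_open.
- by move=> x Sx; apply: QM => i; exact: S_bnd.
Qed.

Lemma eq_int_on d (S : set 'rV[R]_d) (u v : 'rV[R]_d -> R) :
  (forall x, S x -> u x = v x) -> int_on S u = int_on S v.
Proof.
move=> uv; rewrite /int_on; congr iint; apply/funext => x.
by have [Sx|Sx] := pselect (S x); [rewrite uv | rewrite indicE memNset // !mul0r].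
Qed.

Section SimplexIntegral.
Variables (d : nat) (x0 h : 'rV[R]_d).
Hypothesis h_neq0 : forall k, h 0 k != 0.
Local Notation int_simplex := (int_on (simplex_int x0 h)).

Lemma int_simplexD (P Q : 'rV[R]_d -> R) : cont_bounded P -> cont_bounded Q ->
  int_simplex (fun x => P x + Q x) = int_simplex P + int_simplex Q.
Proof.
move=> P_cb Q_cb; rewrite /int_on -iintD; try exact: diff_blsc_simplex.
by congr iint; apply/funext => x; rewrite mulrDr.
Qed.

Lemma int_simplexB (P Q : 'rV[R]_d -> R) : cont_bounded P -> cont_bounded Q ->
  int_simplex (fun x => P x - Q x) = int_simplex P - int_simplex Q.
Proof.
move=> P_cb Q_cb; rewrite /int_on -iintB; try exact: diff_blsc_simplex.
by congr iint; apply/funext => x; rewrite mulrBr.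
Qed.

Lemma le_int_simplex (P Q : 'rV[R]_d -> R) : cont_bounded P -> cont_bounded Q ->
  (forall x, P x <= Q x) -> int_simplex P <= int_simplex Q.
Proof.
move=> P_cb Q_cb PQ; apply: le_iint; try exact: diff_blsc_simplex.
by move=> x; apply: ler_wpM2l => //; rewrite indicE; case: (_ \in _).
Qed.

End SimplexIntegral.

End Simplices.

(** * Affine functions *)

Section AffineFunctions.
Variable R : realType.

Lemma affine_mapB d c0 c0' (c c' x : 'rV[R]_d) :
  affine_map c0 c x - affine_map c0' c' x = affine_map (c0 - c0') (c - c') x.
Proof.
rewrite /affine_map; under [in RHS]eq_bigr do rewrite !mxE mulrBl.
by rewrite sumrB opprD addrACA.
Qed.

Lemma affine_map_axis d c0 (c x : 'rV[R]_d) (t : R) i :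
  affine_map c0 c (t *: axis R i + x) = affine_map c0 c x + t * c 0 i.
Proof.
rewrite /affine_map; under eq_bigr do rewrite !mxE mulrDr.
rewrite big_split /= (bigD1 i) //= big1 => [|j /negbTE ji]; last first.
  by rewrite ji mulr0 mulr0.
by rewrite eqxx mulr1 addr0; ring.
Qed.

Lemma derive_line_affine d (u : 'rV[R]_d -> R) (x v : 'rV[R]_d) (L : R) :
  (exists2 r, 0 < r & forall t : R, `|t| < r -> u (t *: v + x) = u x + t * L) ->
  'D_v u x = L.
Proof.
move=> [r r0 u_line]; rewrite /derive; apply: cvg_lim => //; apply: cvg_near_cst.
apply/nbhs_ballP; exists r => //= t; rewrite -ball_normE /= sub0r normrN => tr t0.
rewrite /= u_line // addrC addKr.
by rewrite [X in X = _]/GRing.scale /= mulrA mulVf // mul1r.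
Qed.

Lemma grad_affine_on d (S : set 'rV[R]_d) (u : 'rV[R]_d -> R) c0 c x :
  cube_open S -> S x -> (forall y, S y -> u y = affine_map c0 c y) -> grad u x = c.
Proof.
move=> S_open Sx u_aff; apply/rowP => i; rewrite mxE; apply: derive_line_affine.
have [r r0 rS] := S_open x Sx; exists r => // t tr.
have St : S (t *: axis R i + x).
  apply: rS => j; rewrite !mxE addrK.
  by case: (_ && _) => /=; rewrite ?mulr1 ?mulr0 ?normr0.
by rewrite !u_aff // affine_map_axis.
Qed.

Lemma grad_cst d (a : R) (x : 'rV[R]_d) : grad (fun=> a) x = 0.
Proof. by apply/rowP => i; rewrite !mxE; exact: derive_cst. Qed.

Lemma interp_affine_map d (x0 h : 'rV[R]_d) (F : 'rV[R]_d -> R) c0 c :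
  (forall k, h 0 k != 0) -> F x0 = affine_map c0 c x0 ->
  (forall k, F (vtx x0 h k) = affine_map c0 c (vtx x0 h k)) ->
  forall x, interp x0 h F x = affine_map c0 c x.
Proof.
move=> h_neq0 F_x0 F_vtx x; rewrite /interp F_x0.
have edge k : (F (vtx x0 h k) - affine_map c0 c x0) * ((x - x0) 0 k / h 0 k) =
    c 0 k * x 0 k - c 0 k * x0 0 k.
  rewrite F_vtx /vtx (addrC x0) affine_map_axis addrAC subrr add0r !mxE.
  by field; exact: h_neq0.
under eq_bigr do rewrite edge.
by rewrite sumrB /affine_map addrAC addrA subrK.
Qed.

Lemma monomial_deg_le1 d (a : {ffun 'I_d -> 'I_2}) (x : 'rV[R]_d) :
  (\sum_i (a i : nat) <= 1)%N ->
  \prod_i x 0 i ^+ a i = (1 - \sum_i (a i : nat)%:R) + \sum_i (a i : nat)%:R * x 0 i.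
Proof.
move=> a_le1; have [j aj|a0] := pickP (fun j => (a j : nat) != 0%N); last first.
  have a0' i : (a i : nat) = 0%N by have := a0 i => /= /negbFE /eqP.
  rewrite big1 => [|i _]; last by rewrite a0' expr0.
  rewrite big1 => [|i _]; last by rewrite a0'.
  by rewrite big1 => [|i _]; rewrite ?a0' ?mul0r // subr0 addr0.
have aj1 : (a j : nat) = 1%N.
  by have := ltn_ord (a j); move: aj; case: (a j : nat) => [|[|]].
have a_other i : i != j -> (a i : nat) = 0%N.
  move=> ij; move: a_le1; rewrite (bigD1 j) //= aj1 (bigD1 i) //=.
  by case: (a i : nat).
rewrite (bigD1 j) //= big1 => [|i ij]; last by rewrite a_other // expr0.
rewrite (bigD1 j) //= big1 => [|i ij]; last by rewrite a_other.
rewrite (bigD1 j) //= big1 => [|i ij]; last by rewrite a_other // mul0r.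
by rewrite aj1 expr1 mulr1 addr0 mul1r addr0 subrr add0r.
Qed.

Lemma poly_le1_affine d (p : 'rV[R]_d -> R) :
  is_poly_le 1 p -> exists c0 c, forall x, p x = affine_map c0 c x.
Proof.
move=> [c pc].
exists (\sum_(a : {ffun 'I_d -> 'I_2} | (\sum_i (a i : nat) <= 1)%N)
          c a * (1 - \sum_i (a i : nat)%:R)).
exists (\row_i \sum_(a : {ffun 'I_d -> 'I_2} | (\sum_i (a i : nat) <= 1)%N)
          c a * (a i : nat)%:R).
move=> x; rewrite pc /affine_map.
under eq_bigr => a a_le1 do rewrite monomial_deg_le1 // mulrDr mulr_sumr.
rewrite big_split /=; congr (_ + _).
rewrite exchange_big /=; apply: eq_bigr => i _.
by rewrite mxE mulr_suml; apply: eq_bigr => a _; rewrite mulrA.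
Qed.

Lemma sum_delta (I : finType) (P : pred I) (b : I) (F : I -> R) :
  P b -> \sum_(a | P a) (a == b)%:R * F a = F b.
Proof.
move=> Pb; rewrite (bigD1 b) //= eqxx mul1r big1 ?addr0 // => a /andP[_ /negbTE ->].
by rewrite mul0r.
Qed.

Lemma affine_map_poly_le d k c0 (c : 'rV[R]_d) : (1 <= k)%N ->
  is_poly_le k (affine_map c0 c).
Proof.
move=> k_ge1.
pose e0 : {ffun 'I_d -> 'I_k.+1} := [ffun _ => ord0].
pose e (j : 'I_d) : {ffun 'I_d -> 'I_k.+1} :=
  [ffun i => if i == j then inord 1 else ord0].
exists (fun a => c0 * (a == e0)%:R + \sum_j c 0 j * (a == e j)%:R) => x.
rewrite /affine_map; apply/esym.
under eq_bigr do rewrite mulrDl mulr_suml.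
rewrite big_split /=; congr (_ + _).
  under eq_bigr do rewrite -mulrA.
  rewrite -mulr_sumr sum_delta; last by rewrite big1 // => i _; rewrite ffunE.
  by rewrite big1 ?mulr1 // => i _; rewrite ffunE expr0.
rewrite exchange_big /=; apply: eq_bigr => j _.
under eq_bigr do rewrite -mulrA.
rewrite -mulr_sumr sum_delta.
  congr (_ * _); rewrite (bigD1 j) //= ffunE eqxx inordK // expr1 big1 ?mulr1 //.
  by move=> i /negbTE ij; rewrite ffunE ij expr0.
rewrite (bigD1 j) //= ffunE eqxx inordK // big1 ?addn0 // => i /negbTE ij.
by rewrite ffunE ij.
Qed.

End AffineFunctions.

(** * The energy estimate *)

Section Energy.
Variable R : realType.

Lemma derive1_Fc (eta p : R) :
  derive1 (Fc eta) p = (4 * eta ^+ 2)^-1 * (4 * p ^+ 3 - 6 * p ^+ 2 + 3 * p).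
Proof.
pose P : {poly R} := (4 * eta ^+ 2)^-1 *: ('X^4 - 2%:P * 'X^3 + (3 / 2)%:P * 'X^2).
have -> : Fc eta = horner P by apply/funext => x; rewrite /Fc /P !hornerE.
rewrite -derive.derivE /P !(derivZ, derivD, derivB, derivN, derivXn, derivM, derivC, derivX).
by rewrite !hornerE /=; congr (_ * _); field.
Qed.

Lemma derive1_Fe (eta p : R) : derive1 (Fe eta) p = - (8 * eta ^+ 2)^-1 * (2 * p).
Proof.
pose P : {poly R} := (- (8 * eta ^+ 2)^-1) *: 'X^2.
have -> : Fe eta = horner P by apply/funext => x; rewrite /Fe /P !hornerE.
rewrite -derive.derivE /P !(derivZ, derivXn).
by rewrite !hornerE /=; ring.
Qed.

Lemma Fdw_splitting (eta a b : R) : 0 < eta ->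
  Fdw eta b - Fdw eta a <= (derive1 (Fc eta) b + derive1 (Fe eta) a) * (b - a).
Proof.
move=> eta0; rewrite derive1_Fc derive1_Fe /Fdw -subr_ge0.
set K := (4 * eta ^+ 2)^-1.
have K0 : 0 < K by rewrite invr_gt0 mulr_gt0 // exprn_gt0.
have -> : (8 * eta ^+ 2)^-1 = K / 2.
  by rewrite /K -[8]/(2 * 4)%:R natrM; field; rewrite gt_eqF ?exprn_gt0.
have -> : (K * (4 * b ^+ 3 - 6 * b ^+ 2 + 3 * b) + - (K / 2) * (2 * a)) * (b - a) -
    (K * (b ^+ 2 * (b - 1) ^+ 2) - K * (a ^+ 2 * (a - 1) ^+ 2)) =
    K * ((a - b) ^+ 2 * ((a + b - 1) ^+ 2 + (2 * b - 1) ^+ 2 / 2 + 1 / 2)).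
  by field.
apply: mulr_ge0; first exact: ltW.
by apply: mulr_ge0; rewrite ?sqr_ge0 // !addr_ge0 ?divr_ge0 ?sqr_ge0.
Qed.

Lemma half_dotv_le d (a b : 'rV[R]_d) :
  1 / 2 * dotv a a - 1 / 2 * dotv b b <= dotv a (a - b).
Proof.
rewrite /dotv !mulr_sumr -sumrB; apply: ler_sum => i _; rewrite !mxE -subr_ge0.
have -> : a 0 i * (a 0 i - b 0 i) - (1 / 2 * (a 0 i * a 0 i) - 1 / 2 * (b 0 i * b 0 i))
    = (a 0 i - b 0 i) ^+ 2 / 2 by field.
by rewrite divr_ge0 ?sqr_ge0.
Qed.

Definition affine_on d (x0 h : 'rV[R]_d) (phi : 'rV[R]_d -> R) : Prop :=
  exists c0 c, forall x, simplex x0 h x -> phi x = affine_map c0 c x.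

Lemma affine_onB d (x0 h : 'rV[R]_d) (phi psi : 'rV[R]_d -> R) :
  affine_on x0 h phi -> affine_on x0 h psi -> affine_on x0 h (fun x => phi x - psi x).
Proof.
move=> [c0 [c phi_aff]] [c0' [c' psi_aff]]; exists (c0 - c0'), (c - c') => x Sx.
by rewrite phi_aff ?psi_aff ?affine_mapB.
Qed.

Lemma affine_on_cst d (x0 h : 'rV[R]_d) (a : R) : affine_on x0 h (fun=> a).
Proof.
exists a, 0 => x _; rewrite /affine_map big1 ?addr0 // => i _.
by rewrite mxE mul0r.
Qed.

Section Element.
Variables (d : nat) (x0 h : 'rV[R]_d).
Hypothesis h_neq0 : forall k, h 0 k != 0.
Local Notation int_simplex := (int_on (simplex_int x0 h)).

Lemma int_simplex_affine_map phi c0 c :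
  (forall x, simplex x0 h x -> phi x = affine_map c0 c x) ->
  int_simplex phi = int_simplex (affine_map c0 c).
Proof. by move=> phi_aff; apply: eq_int_on => x /simplex_int_sub; exact: phi_aff. Qed.

Lemma grad_simplex_int (phi : 'rV[R]_d -> R) c0 c x :
  (forall y, simplex x0 h y -> phi y = affine_map c0 c y) ->
  simplex_int x0 h x -> grad phi x = c.
Proof.
move=> phi_aff Sx; apply: grad_affine_on (simplex_int_open h_neq0) Sx _ => y.
by move=> /simplex_int_sub; exact: phi_aff.
Qed.

Lemma int_simplex_interp1 (f : 'rV[R]_d -> R) : affine_on x0 h f ->
  int_simplex (interp x0 h (fun x => f x * 1)) = int_simplex f.
Proof.
move=> [c0 [c f_aff]]; rewrite (int_simplex_affine_map f_aff).
apply: eq_int_on => x _; apply: interp_affine_map => [//||k].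
  by rewrite mulr1 f_aff //; exact: simplex_x0.
by rewrite mulr1 f_aff //; exact: simplex_vtx.
Qed.

Lemma int_simplexB_affine (phi psi : 'rV[R]_d -> R) :
  affine_on x0 h phi -> affine_on x0 h psi ->
  int_simplex (fun x => phi x - psi x) = int_simplex phi - int_simplex psi.
Proof.
move=> [c0 [c phi_aff]] [c0' [c' psi_aff]].
rewrite (int_simplex_affine_map phi_aff) (int_simplex_affine_map psi_aff).
rewrite -int_simplexB //; try exact: cont_bounded_affine_map.
by apply: eq_int_on => x /simplex_int_sub Sx; rewrite phi_aff ?psi_aff.
Qed.

Lemma int_simplex_energy_le eta (phi1 phin : 'rV[R]_d -> R) :
  0 < eta -> affine_on x0 h phi1 -> affine_on x0 h phin ->
  int_simplex (fun x => 1 / 2 * dotv (grad phi1 x) (grad phi1 x) + Fdw eta (phi1 x))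
  - int_simplex (fun x => 1 / 2 * dotv (grad phin x) (grad phin x) + Fdw eta (phin x))
  <= int_simplex (fun x => dotv (grad phi1 x) (grad (fun y => phi1 y - phin y) x))
   + int_simplex (fun x =>
       (derive1 (Fc eta) (phi1 x) + derive1 (Fe eta) (phin x)) * (phi1 x - phin x)).
Proof.
move=> eta0 [c01 [c1 phi1_aff]] [c0n [cn phin_aff]].
set S := simplex_int x0 h.
have phi1_S x : S x -> phi1 x = affine_map c01 c1 x.
  by move=> /simplex_int_sub; exact: phi1_aff.
have phin_S x : S x -> phin x = affine_map c0n cn x.
  by move=> /simplex_int_sub; exact: phin_aff.
have grad1 x : S x -> grad phi1 x = c1 := grad_simplex_int phi1_aff.
have gradn x : S x -> grad phin x = cn := grad_simplex_int phin_aff.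
have gradB x : S x -> grad (fun y => phi1 y - phin y) x = c1 - cn.
  by apply: grad_simplex_int => y Sy; rewrite phi1_aff ?phin_aff ?affine_mapB.
pose A1 := affine_map c01 c1; pose An := affine_map c0n cn.
pose e1 x := 1 / 2 * dotv c1 c1 + Fdw eta (A1 x).
pose en x := 1 / 2 * dotv cn cn + Fdw eta (An x).
pose split x := (derive1 (Fc eta) (A1 x) + derive1 (Fe eta) (An x)) * (A1 x - An x).
have e1_cb : cont_bounded e1 by rewrite /e1 /A1 /Fdw; cont_bounded_poly.
have en_cb : cont_bounded en by rewrite /en /An /Fdw; cont_bounded_poly.
have split_cb : cont_bounded split.
  by rewrite /split /A1 /An; under eq_fun do rewrite derive1_Fc derive1_Fe; cont_bounded_poly.
rewrite [X in X - _ <= _](eq_int_on (v := e1)); last first.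
  by move=> x Sx; rewrite grad1 ?phi1_S.
rewrite [X in _ - X <= _](eq_int_on (v := en)); last first.
  by move=> x Sx; rewrite gradn ?phin_S.
rewrite [X in _ <= X + _](eq_int_on (v := fun=> dotv c1 (c1 - cn))); last first.
  by move=> x Sx; rewrite grad1 ?gradB.
rewrite [X in _ <= _ + X](eq_int_on (v := split)); last first.
  by move=> x Sx; rewrite phi1_S ?phin_S.
rewrite -int_simplexB // -int_simplexD //; last exact: cont_bounded_cst.
apply: le_int_simplex => //.
- by apply: cont_boundedD => //; exact: cont_boundedN.
- by apply: cont_boundedD => //; exact: cont_bounded_cst.
move=> x; have := half_dotv_le c1 cn; have := Fdw_splitting (An x) (A1 x) eta0.
by rewrite /e1 /en /split; lra.
Qed.

End Element.

End Energy.

(** * The scheme *)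

Section Mesh.
Variables (R : realType) (d : nat) (E : finType) (x0 h : E -> 'rV[R]_d).
Hypothesis h_neq0 : forall e k, h e 0 k != 0.

Lemma pw_poly1_affine_on (phi : 'rV[R]_d -> R) :
  pw_poly 1 x0 h phi -> forall e, affine_on (x0 e) (h e) phi.
Proof.
move=> phi_P1 e; have [p [p_P1 phi_p]] := phi_P1 e.
have [c0 [c p_aff]] := poly_le1_affine p_P1.
by exists c0, c => x Sx; rewrite phi_p // p_aff.
Qed.

Lemma affine_on_pw_poly k (phi : 'rV[R]_d -> R) : (1 <= k)%N ->
  (forall e, affine_on (x0 e) (h e) phi) -> pw_poly k x0 h phi.
Proof.
move=> k_ge1 phi_aff e; have [c0 [c phi_c]] := phi_aff e.
by exists (affine_map c0 c); split => //; exact: affine_map_poly_le.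
Qed.

Lemma lumped_one (f : 'rV[R]_d -> R) : (forall e, affine_on (x0 e) (h e) f) ->
  lumped x0 h f (fun=> 1) = intO x0 h f.
Proof. by move=> f_aff; apply: eq_bigr => e _; exact: int_simplex_interp1. Qed.

Lemma lumpedC (f g : 'rV[R]_d -> R) : lumped x0 h f g = lumped x0 h g f.
Proof.
apply: eq_bigr => e _; congr (int_on _ (interp _ _ _)).
by apply/funext => x; rewrite mulrC.
Qed.

Lemma intOB (phi psi : 'rV[R]_d -> R) :
  (forall e, affine_on (x0 e) (h e) phi) -> (forall e, affine_on (x0 e) (h e) psi) ->
  intO x0 h (fun x => phi x - psi x) = intO x0 h phi - intO x0 h psi.
Proof.
move=> phi_aff psi_aff; rewrite /intO -sumrB; apply: eq_bigr => e _.
exact: int_simplexB_affine.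
Qed.

Lemma Mform_cst eps (phi u : 'rV[R]_d -> R) (a : R) : Mform eps x0 h phi u (fun=> a) = 0.
Proof.
rewrite /Mform big1 // => e _; rewrite /int_on -[RHS](iint0 R d); congr iint.
apply/funext => x; rewrite big1 ?mulr0 // => k _.
by rewrite grad_cst !mxE mulr0.
Qed.

Lemma energyB_le eta (phi1 phin : 'rV[R]_d -> R) : 0 < eta ->
  (forall e, affine_on (x0 e) (h e) phi1) -> (forall e, affine_on (x0 e) (h e) phin) ->
  energy eta x0 h phi1 - energy eta x0 h phin <=
  intO x0 h (fun x => dotv (grad phi1 x) (grad (fun y => phi1 y - phin y) x))
  + intO x0 h (fun x =>
      (derive1 (Fc eta) (phi1 x) + derive1 (Fe eta) (phin x)) * (phi1 x - phin x)).
Proof.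
move=> eta0 phi1_aff phin_aff; rewrite /energy /intO -sumrB -big_split.
by apply: ler_sum => e _; exact: int_simplex_energy_le.
Qed.

End Mesh.

Section Scheme.
Variables (R : realType) (d : nat) (E : finType) (x0 h : E -> 'rV[R]_d).
Variables (k : nat) (eps dt : R) (phin phi1 mu1 : 'rV[R]_d -> R).
Hypotheses (h_neq0 : forall e j, h e 0 j != 0) (dt_gt0 : 0 < dt).
Hypotheses (phin_P1 : pw_poly 1 x0 h phin) (phi1_P1 : pw_poly 1 x0 h phi1).
Hypothesis mu_eq : forall mub, pw_poly k x0 h mub ->
  dt^-1 * lumped x0 h (fun x => phi1 x - phin x) mub + Mform eps x0 h phi1 mu1 mub = 0.

Let phi1_aff := pw_poly1_affine_on phi1_P1.
Let phin_aff := pw_poly1_affine_on phin_P1.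
Let dphi_aff e := affine_onB (phi1_aff e) (phin_aff e).

Lemma scheme_mass_conservation : (1 <= k)%N -> intO x0 h phi1 = intO x0 h phin.
Proof.
move=> k_ge1; have := mu_eq (affine_on_pw_poly k_ge1 (fun e => affine_on_cst _ _ 1)).
rewrite Mform_cst addr0 lumped_one // intOB // => /eqP.
by rewrite mulf_eq0 invr_eq0 gt_eqF //= subr_eq0 => /eqP.
Qed.

Lemma scheme_energy_dissipation eta : 0 < eta -> pw_poly k x0 h mu1 ->
  (forall phib, pw_poly 1 x0 h phib ->
     intO x0 h (fun x => dotv (grad phi1 x) (grad phib x))
     + intO x0 h (fun x => (derive1 (Fc eta) (phi1 x) + derive1 (Fe eta) (phin x)) * phib x)
     = lumped x0 h mu1 phib) ->
  (energy eta x0 h phi1 - energy eta x0 h phin) / dt + Mform eps x0 h phi1 mu1 mu1 <= 0.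
Proof.
move=> eta0 mu1_Pk phi_eq.
have energy_le := energyB_le h_neq0 eta0 phi1_aff phin_aff.
rewrite (phi_eq _ (affine_on_pw_poly (leqnn 1) dphi_aff)) lumpedC in energy_le.
have -> : Mform eps x0 h phi1 mu1 mu1 =
    - (dt^-1 * lumped x0 h (fun x => phi1 x - phin x) mu1).
  by apply/eqP; rewrite -addr_eq0 addrC mu_eq.
by rewrite subr_le0 mulrC ler_wpM2l // invr_ge0 ltW.
Qed.

End Scheme.

Unset Implicit Arguments.
Unset Strict Implicit.

Theorem lemma6 (R : realType) (d : nat) (E : finType)
  (x0 h : E -> 'rV[R]_d) (Omega : set 'rV[R]_d) (k : nat)
  (eta eps T : R) (N : nat)
  (phin phi1 mu1 : 'rV[R]_d -> R) :
  (1 <= d <= 3)%N ->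
  structured_triangulation x0 h Omega ->
  (1 <= k)%N ->
  0 < eta -> 0 < eps -> eps < 1 / 2 ->
  0 < T -> (0 < N)%N ->
  let dt := T / N%:R in
  pw_poly 1 x0 h phin ->
  pw_poly 1 x0 h phi1 ->
  pw_poly k x0 h mu1 ->
  (forall mub : 'rV[R]_d -> R, pw_poly k x0 h mub ->
     dt^-1 * lumped x0 h (fun x => phi1 x - phin x) mub
     + Mform eps x0 h phi1 mu1 mub = 0) ->
  (forall phib : 'rV[R]_d -> R, pw_poly 1 x0 h phib ->
     intO x0 h (fun x => dotv (grad phi1 x) (grad phib x))
     + intO x0 h (fun x => (derive1 (Fc eta) (phi1 x) + derive1 (Fe eta) (phin x)) * phib x)
     = lumped x0 h mu1 phib) ->
  intO x0 h phi1 = intO x0 h phin /\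
  (energy eta x0 h phi1 - energy eta x0 h phin) / dt
    + Mform eps x0 h phi1 mu1 mu1 <= 0.
Proof.
move=> _ [h_neq0 _ _] k_ge1 eta0 _ _ T0 N0 dt phin_P1 phi1_P1 mu1_Pk mu_eq phi_eq.
have dt_gt0 : 0 < dt by rewrite divr_gt0 // ltr0n.
split; first exact: scheme_mass_conservation mu_eq k_ge1.
exact: scheme_energy_dissipation mu1_Pk phi_eq.
Qed.
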